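(* Let $m\ge 2$ be even, $n\ge 1$, and let $\mathcal{T}=(t_{i_1 i_2\cdots i_m})\in\mathbb{R}^{[m,n]}$ be a Nekrasov $Z$ tensor all of whose diagonal elements $t_{i i\cdots i}$ ($i\in[n]$) are positive. Then $\mathcal{T}$ is a $P$-tensor, i.e. for every $x\in\mathbb{R}^n\setminus\{0\}$ there exists $j\in[n]$ with $x_j\neq 0$ and $x_j(\mathcal{T}x^{m-1})_j>0$.
   Context: $[n]=\{1,\dots,n\}$ and $\mathbb{R}^{[m,n]}$ denotes the set of real tensors $\mathcal{T}=(t_{i_1\cdots i_m})$ with $i_1,\dots,i_m\in[n]$ (order $m$, dimension $n$). For $x\in\mathbb{R}^n$, $(\mathcal{T}x^{m-1})_i=\sum_{i_2,\dots,i_m=1}^n t_{i i_2\cdots i_m}x_{i_2}\cdots x_{i_m}$. A diagonal element is $t_{i\cdots i}$; all other entries are off-diagonal. $\mathcal{T}$ is a $Z$ tensor if all its off-diagonal entries are nonpositive. For $\mathcal{T}$ with $t_{i\cdots i}\neq 0$ for all $i$, define $R_i(\mathcal{T})=\sum_{(i_2,\dots,i_m)\neq(i,\dots,i)}|t_{i i_2\cdots i_m}|$, $\Lambda_1(\mathcal{T})=R_1(\mathcal{T})$, and for $i=2,\dots,n$ $$\Lambda_i(\mathcal{T})=\sum_{(i_2,\dots,i_m)\in[i-1]^{m-1}}|t_{i i_2\cdots i_m}|\Big(\tfrac{\Lambda_{i_2}(\mathcal{T})}{|t_{i_2\cdots i_2}|}\Big)^{\frac{1}{m-1}}\cdots\Big(\tfrac{\Lambda_{i_m}(\mathcal{T})}{|t_{i_m\cdots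 i_m}|}\Big)^{\frac{1}{m-1}}+\sum_{(i_2,\dots,i_m)\notin[i-1]^{m-1},\ (i_2,\dots,i_m)\neq(i,\dots,i)}|t_{i i_2\cdots i_m}|.$$ $\mathcal{T}$ is a Nekrasov tensor if $|t_{i\cdots i}|>\Lambda_i(\mathcal{T})$ for all $i\in[n]$. A Nekrasov $Z$ tensor is a tensor that is both a Nekrasov tensor and a $Z$ tensor. *)

From HB Require Import structures.
From mathcomp Require Import all_boot all_order all_algebra.
From mathcomp Require Import reals exp.
Set Implicit Arguments. Unset Strict Implicit. Unset Printing Implicit Defensive.
Import Order.TTheory GRing.Theory Num.Theory.
Local Open Scope ring_scope.

(* A real tensor of order m and dimension n, T = (t_{i1 i2 ... im}), is
   encoded as t : 'I_n -> (m.-1).-tuple 'I_n -> R, where  t i1 [i2;...;im]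
   is the entry t_{i1 i2 ... im}.  (Indices are 0-based: [n] = 'I_n.) *)
Definition tensor (R : Type) (m n : nat) := 'I_n -> (m.-1).-tuple 'I_n -> R.

Section Tensors.
Variables (R : realType) (m n : nat).
Implicit Types (t : tensor R m n).

Definition dg (i : 'I_n) : (m.-1).-tuple 'I_n := nseq_tuple (m.-1) i.

Definition tdiag t (i : 'I_n) : R := t i (dg i).

Definition tapply t (x : 'I_n -> R) (i : 'I_n) : R :=
  \sum_(tau : (m.-1).-tuple 'I_n) t i tau * \prod_(j <- tau) x j.

Definition Ztensor t : Prop :=
  forall (i : 'I_n) (tau : (m.-1).-tuple 'I_n), tau != dg i -> t i tau <= 0.

(* One step of the recursive definition of Lambda_i, given the (already
   computed) values f j = Lambda_j for j < i. *)
Definition lam_step t (f : nat -> R) (i : 'I_n) : R :=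
  \sum_(tau : (m.-1).-tuple 'I_n)
     (if all (fun j : 'I_n => (j < i)%N) tau then
        `|t i tau| * \prod_(j <- tau)
                       ((f (val j) / `|tdiag t j|) `^ ((m.-1)%:R)^-1)
      else if tau != dg i then `|t i tau| else 0).

(* lamf k j = Lambda_j for j < k *)
Fixpoint lamf t (k : nat) : nat -> R :=
  match k with
  | 0 => fun _ => 0
  | k.+1 => fun j =>
      if (j < k)%N then lamf t k j
      else match @insub _ (fun a : nat => (a < n)%N) 'I_n k with
           | Some i => lam_step t (lamf t k) i
           | None => 0
           end
  end.

Definition Lambda t (i : 'I_n) : R := lamf t n (val i).

Definition Nekrasov t : Prop := forall i : 'I_n, Lambda t i < `|tdiag t i|.

Definition Ptensor t : Prop :=
  forall x : 'I_n -> R, (exists i, x i != 0) ->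
    exists j : 'I_n, x j != 0 /\ 0 < x j * tapply t x j.

End Tensors.

From HB Require Import structures.
From mathcomp Require Import all_boot all_order all_algebra.
From mathcomp Require Import reals exp lra.
Import Order.TTheory GRing.Theory Num.Theory.
Local Open Scope ring_scope.

(* Suppose x <> 0 but x_j (T x^{m-1})_j <= 0 for every j, and put u = |x|,
   M = max_j u_j.  As m is even, x_j^m = u_j^m, so t_{j...j} u_j^{m-1} is at
   most the off-diagonal sum of |t_{j tau}| u_tau.  Induction on i then gives
   t_{i...i} u_i^{m-1} <= M^{m-1} Lambda_i: for a tail tau with all indices
   below i, each factor u_l is bounded by M (Lambda_l / t_{l...l})^{1/(m-1)},
   and for any other tail by M.  At an index with u_i = M this contradicts
   Lambda_i < t_{i...i}. *)

Lemma prodr_const_tuple {R : pzSemiRingType} {I : Type} {k} (tau : k.-tuple I)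
    (c : R) :
  \prod_(j <- tau) c = c ^+ k.
Proof. by rewrite big_const_seq count_predT size_tuple iter_mulr_1. Qed.

Lemma ler_root_of_exprn (R : realType) (k : nat) (d u M L : R) :
  (0 < k)%N -> 0 < d -> 0 <= u -> 0 <= M -> 0 <= L ->
  d * u ^+ k <= M ^+ k * L -> u <= M * (L / d) `^ k%:R^-1.
Proof.
move=> k_gt0 d_gt0 u_ge0 M_ge0 L_ge0 le_du.
have Ld_ge0 : 0 <= L / d by rewrite divr_ge0 // ltW.
rewrite -(ler_pXn2r k_gt0) ?nnegrE ?mulr_ge0 ?powR_ge0 //.
rewrite exprMn -[(_ `^ _) ^+ k]powR_mulrn ?powR_ge0 //.
rewrite -powRrM mulVf ?pnatr_eq0 -?lt0n //.
by rewrite powRr1 // mulrA ler_pdivlMr // mulrC.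
Qed.

Section TensorBounds.
Context {R : realType} {m n : nat} (t : tensor R m n).

Lemma lamf_widen {j k k' : nat} :
  (j < k)%N -> (k <= k')%N -> lamf t k' j = lamf t k j.
Proof.
move=> lt_jk /subnKC <-; elim: (k' - k)%N => [|d IH]; first by rewrite addn0.
by rewrite addnS /= (leq_trans lt_jk (leq_addr d k)) IH.
Qed.

Lemma lamf_Lambda (i j : 'I_n) : (j < i)%N -> lamf t i j = Lambda t j.
Proof. by move=> lt_ji; rewrite /Lambda (lamf_widen lt_ji (ltnW (ltn_ord i))). Qed.

Lemma LambdaE (i : 'I_n) : Lambda t i = lam_step t (lamf t i) i.
Proof. by rewrite /Lambda (lamf_widen (ltnSn i) (ltn_ord i)) /= ltnn valK. Qed.

Lemma Lambda_ge0 (i : 'I_n) : 0 <= Lambda t i.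
Proof.
rewrite LambdaE; apply: sumr_ge0 => tau _; case: ifP => _; last by case: ifP.
by rewrite mulr_ge0 // prodr_ge0 // => j _; rewrite powR_ge0.
Qed.

Definition offdiag_sum (u : 'I_n -> R) (i : 'I_n) : R :=
  \sum_(tau | tau != dg m i) `|t i tau| * \prod_(j <- tau) u j.

Lemma offdiag_sum_ge0 u i : (forall j, 0 <= u j) -> 0 <= offdiag_sum u i.
Proof. by move=> u_ge0; rewrite sumr_ge0 // => tau _; rewrite mulr_ge0 ?prodr_ge0. Qed.

Lemma tapply_diag_split x i :
  tapply t x i = tdiag t i * x i ^+ m.-1
                 + \sum_(tau | tau != dg m i) t i tau * \prod_(j <- tau) x j.
Proof. by rewrite /tapply (bigD1 (dg m i)) //= big_nseq iter_mulr_1. Qed.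

Lemma diag_le_offdiag_sum x i :
  (2 <= m)%N -> ~~ odd m -> x i * tapply t x i <= 0 ->
  tdiag t i * `|x i| ^+ m.-1 <= offdiag_sum (fun j => `|x j|) i.
Proof.
move=> m_ge2 m_even le0.
have k_gt0 : (0 < m.-1)%N by rewrite -subn1 subn_gt0.
have [xi0|xi_neq0] := eqVneq (x i) 0.
  by rewrite xi0 normr0 expr0n eqn0Ngt k_gt0 mulr0 offdiag_sum_ge0.
have diag_term : x i * (tdiag t i * x i ^+ m.-1)
                 = `|x i| * (tdiag t i * `|x i| ^+ m.-1).
  rewrite mulrCA [RHS]mulrCA -!exprS prednK ?(ltnW m_ge2) //.
  by rewrite -normrX ger0_norm ?exprn_even_ge0.
have off_term : - (`|x i| * offdiag_sum (fun j => `|x j|) i)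
    <= x i * \sum_(tau | tau != dg m i) t i tau * \prod_(j <- tau) x j.
  rewrite lerNl; apply: le_trans (ler_norm _) _.
  rewrite normrN normrM ler_wpM2l // /offdiag_sum.
  apply: le_trans (ler_norm_sum _ _ _) _; apply: ler_sum => tau _.
  by rewrite normrM normr_prod.
rewrite -(ler_pM2l (_ : 0 < `|x i|)) ?normr_gt0 //.
move: le0; rewrite tapply_diag_split mulrDr diag_term; lra.
Qed.

Section NekrasovBound.
Hypothesis m_ge2 : (2 <= m)%N.
Variables (u : 'I_n -> R) (M : R).
Hypothesis u_ge0 : forall j, 0 <= u j.
Hypothesis u_leM : forall j, u j <= M.
Hypothesis diag_gt0 : forall i, 0 < tdiag t i.
Hypothesis diag_le_offdiag : forall i, tdiag t i * u i ^+ m.-1 <= offdiag_sum u i.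

Lemma offdiag_sum_le_Lambda (i : 'I_n) :
  (forall l : 'I_n, (l < i)%N ->
     u l <= M * (Lambda t l / tdiag t l) `^ (m.-1)%:R^-1) ->
  offdiag_sum u i <= M ^+ m.-1 * Lambda t i.
Proof.
move=> u_le_root.
have M_ge0 : 0 <= M by apply: le_trans (u_leM i).
rewrite LambdaE /lam_step /offdiag_sum big_mkcond mulr_sumr /=.
apply: ler_sum => tau _.
have [lt_tau_i | _] := boolP (all (fun j : 'I_n => (j < i)%N) tau); last first.
  case: ifP => _; last by rewrite mulr0.
  rewrite [leRHS]mulrC ler_wpM2l // -(prodr_const_tuple tau M).
  by apply: ler_prod => l _; rewrite u_ge0 u_leM.
apply: (@le_trans _ _ (`|t i tau| * \prod_(l <- tau) u l)).
  by case: ifP => // _; rewrite mulr_ge0 ?prodr_ge0.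
rewrite mulrCA ler_wpM2l // -(prodr_const_tuple tau M) -big_split /=.
rewrite big_seq [leRHS]big_seq; apply: ler_prod => l l_tau.
have lt_li : (l < i)%N := allP lt_tau_i l l_tau.
by rewrite u_ge0 lamf_Lambda // ger0_norm ?(ltW (diag_gt0 l)) // u_le_root.
Qed.

Lemma diag_le_Lambda (i : 'I_n) :
  tdiag t i * u i ^+ m.-1 <= M ^+ m.-1 * Lambda t i.
Proof.
have [p lt_ip] := ubnP i; elim: p i lt_ip => // p IHp i lt_ip.
apply: le_trans (diag_le_offdiag i) (offdiag_sum_le_Lambda _ _) => l lt_li.
have M_ge0 : 0 <= M by apply: le_trans (u_leM l).
apply: ler_root_of_exprn; rewrite ?diag_gt0 ?Lambda_ge0 //.
  by rewrite -subn1 subn_gt0.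
exact: IHp (leq_trans lt_li _).
Qed.

End NekrasovBound.

End TensorBounds.

Theorem mainTheorem1 (R : realType) (m n : nat) (t : tensor R m n) :
  (2 <= m)%N -> ~~ odd m -> (1 <= n)%N ->
  Ztensor t -> Nekrasov t ->
  (forall i : 'I_n, 0 < tdiag t i) ->
  Ptensor t.
Proof.
move=> m_ge2 m_even _ _ nek diag_gt0 x [i0 xi0_neq0].
have [j /andP[xj_neq0 xj_gt0] | none] :=
  pickP (fun j => (x j != 0) && (0 < x j * tapply t x j)); first by exists j.
have sign_rev j : x j * tapply t x j <= 0.
  move: (none j); have [-> _|_ /=] := eqVneq (x j) 0; first by rewrite mul0r.
  by rewrite leNgt => ->.
pose u j := `|x j|.
have [imax _ u_max] := @arg_maxP _ R _ i0 xpredT u isT.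
have M_gt0 : 0 < u imax by apply: lt_le_trans (u_max i0 isT); rewrite normr_gt0.
have bound := diag_le_Lambda t m_ge2 u (u imax) (fun j => normr_ge0 (x j))
  (fun j => u_max j isT) diag_gt0
  (fun j => diag_le_offdiag_sum t x j m_ge2 m_even (sign_rev j)) imax.
suff: u imax ^+ m.-1 * Lambda t imax < tdiag t imax * u imax ^+ m.-1.
  by rewrite ltNge bound.
rewrite mulrC ltr_pM2r ?exprn_gt0 //.
by have := nek imax; rewrite ger0_norm // ltW.
Qed.
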